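(* Let $G$ be a graph with an RDV representation on a rooted tree $T$, with node coordinates $x(\cdot),y(\cdot)$ defined as in the context, and let $v_1,\dots,v_n$ be a bottom-up enumeration of the vertices of $G$. Then for all $1\le i<j\le n$, $v_iv_j$ is an edge of $G$ if and only if the vertical segment $q(v_j)$ intersects the horizontal segment $s(v_i)$.
   Context: An RDV representation of a graph $G$ consists of a rooted tree $T$ (the host tree; its vertices are called nodes) and, for every vertex $v$ of $G$, a downward path $P(v)$ in $T$ (a path that starts at some node and then always proceeds from a node to one of its children), such that for distinct vertices $v,w$, $vw$ is an edge of $G$ if and only if $P(v)$ and $P(w)$ share at least one node. For a vertex $v$, $t(v)$ denotes the node of $P(v)$ closest to the root, and $b(v)$ the node of $P(v)$ farthest from the root. A bottom-up enumeration is an ordering of the vertices of $G$ by non-increasing distance of $t(v)$ from the root (ties broken arbitrarily). Coordinates: fix an arbitrary order of the children at each node of $T$, and number the leaves $L_1,\dots,L_\ell$ from left to right according to this order (i.e., in the order they are encountered by a depth-first traversal respecting the child orders). For a node $u$, let $\ell(u)$ and $r(u)$ be the leftmost (lowest-indexed) and rightmost (highest-indexed) leaf descendant of $u$ (a leaf is its own descendant); let $x(u)$ be the index of $\ell(u)$ and, for a leaf $L_k$, $x(L_k)=k$; let $y(u)$ be the distance (number of edges) from $u$ to the root. Node $u$ is associated with the point $(x(u),y(u))\in\mathbb{R}^2$. For a vertex $v$, the horizontal segment $s(v)$ is the segment from $(x(t(v)),y(t(v)))$ to $(x(r(t(v))),y(t(v)))$, and the vertical segment $q(v)$ is the segment from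 $(x(b(v)),y(b(v)))$ to $(x(b(v)),y(t(v)))$. *)

From mathcomp Require Import all_boot all_order all_algebra.
Set Implicit Arguments. Unset Strict Implicit. Unset Printing Implicit Defensive.
Import Order.TTheory GRing.Theory Num.Theory.

Definition rooted_tree (N : finType) (root : N) (par : N -> N) : Prop :=
  par root = root /\ forall u : N, exists k, iter k par u = root.

Section Tree.
Variables (N : finType) (root : N) (par : N -> N).

(* (in a rooted tree on N every ancestor is reached within #|N| - 1 steps) *)
Definition anc (a u : N) : bool := [exists k : 'I_#|N|, iter k par u == a].

Definition depth (u : N) : nat :=
  \big[minn/#|N|]_(k < #|N|.+1 | iter k par u == root) k.

Definition is_child (w u : N) : bool := (w != root) && (par w == u).
Definition is_leaf (u : N) : bool := [forall w, ~~ is_child w u].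

Definition sibling_order (ord : N -> nat) : Prop :=
  forall a b : N, a != root -> b != root -> a != b -> par a = par b ->
    ord a != ord b.

Variable ord : N -> nat.

(* leaf L1 is encountered before leaf L2 by a DFS respecting the child orders *)
Definition leaf_before (L1 L2 : N) : bool :=
  [exists a : N, exists b : N, [&& a != root, b != root, par a == par b,
                      ord a < ord b, anc a L1 & anc b L2]].

Definition leaf_index (L : N) : nat :=
  #|[set L' : N | is_leaf L' && leaf_before L' L]|.+1.

Definition xcoord (u : N) : nat :=
  \big[minn/#|N|.+1]_(L : N | is_leaf L && anc u L) leaf_index L.

Definition xright (u : N) : nat :=
  \max_(L : N | is_leaf L && anc u L) leaf_index L.

Definition ycoord (u : N) : nat := depth u.

End Tree.

Local Open Scope ring_scope.
Definition segment (R : realFieldType) (P Q : R * R) (p : R * R) : Prop :=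
  exists lam : R, 0 <= lam <= 1 /\
    p = (P.1 + lam * (Q.1 - P.1), P.2 + lam * (Q.2 - P.2)).

Section RDV.
Variables (N : finType) (root : N) (par : N -> N) (ord : N -> nat).
Variables (V : finType) (t b : V -> N).

Definition on_path (v : V) (u : N) : bool := anc par (t v) u && anc par u (b v).

Definition pt (R : realFieldType) (u : N) : R * R :=
  ((xcoord root par ord u)%:R, (ycoord root par u)%:R).

Definition hseg (R : realFieldType) (v : V) : R * R -> Prop :=
  segment (pt R (t v)) ((xright root par ord (t v))%:R, (ycoord root par (t v))%:R).

Definition vseg (R : realFieldType) (v : V) : R * R -> Prop :=
  segment (pt R (b v)) ((xcoord root par ord (b v))%:R, (ycoord root par (t v))%:R).

End RDV.

Definition rdv_rep (N : finType) (root : N) (par : N -> N)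
  (V : finType) (adj : rel V) (t b : V -> N) : Prop :=
  (forall v, anc par (t v) (b v)) /\
  (forall v w, v != w ->
     (adj v w <-> exists u, on_path par t b v u /\ on_path par t b w u)).

From Pilot Require Import Defs.
From mathcomp Require Import all_boot all_order all_algebra.
From mathcomp Require Import zify ring lra.
Import Order.TTheory GRing.Theory Num.Theory.
Set Implicit Arguments. Unset Strict Implicit. Unset Printing Implicit Defensive.

(* The paths [P(v)] and [P(w)], where [t(w)] is not deeper than [t(v)], meet
   iff [P(w)] passes through [t(v)], i.e. iff [t(v)] is an ancestor of [b(w)].
   Since siblings are ordered, the leaves below a node [a] are exactly those
   with index in [x(a), x(r(a))]; so [u] lies below [a] iff its leftmost leaf
   does, iff [x(a) <= x(u) <= x(r(a))] and [y(a) <= y(u)].  Together with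
   [y(t(w)) <= y(t(v))] these are exactly the conditions for the vertical
   segment [q(w)] to cross the horizontal segment [s(v)]. *)

Section RootedTree.
Variables (N : finType) (root : N) (par : N -> N).
Hypothesis tree : rooted_tree root par.

Local Notation depth := (depth root par).
Local Notation anc := (anc par).

Lemma iter_par_root k : iter k par root = root.
Proof. by elim: k => //= k ->; case: tree. Qed.

Lemma first_root_lt_card u m :
  iter m par u = root -> (forall k, iter k par u = root -> m <= k) -> m < #|N|.
Proof.
move=> root_m min_m.
have iter_neq i j : i < j <= m -> iter i par u <> iter j par u.
  case/andP=> lt_ij le_jm eq_ij.
  have := min_m (m - j + i); rewrite iterD eq_ij -iterD subnK // root_m.
  by move/(_ erefl); lia.
have inj_iter : injective (fun k : 'I_m.+1 => iter k par u).
  move=> i j /= eq_ij; apply: val_inj => /=.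
  have := ltn_ord i; have := ltn_ord j; rewrite !ltnS.
  case: (ltngtP i j) => // [lt_ij|lt_ji] le_jm le_im.
    by have := iter_neq i j; rewrite lt_ij le_jm => /(_ isT).
  by have := iter_neq j i; rewrite lt_ji le_im => /(_ isT) /(_ (esym eq_ij)).
by have := leq_card _ inj_iter; rewrite card_ord.
Qed.

Lemma depth_spec u :
  [/\ iter (depth u) par u = root,
      forall k, iter k par u = root -> depth u <= k & depth u < #|N|].
Proof.
have exP : exists k, iter k par u == root by have [k /eqP] := tree.2 u; exists k.
have [m /eqP root_m min_m] := ex_minnP exP.
have {}min_m k : iter k par u = root -> m <= k by move/eqP; apply: min_m.
have m_lt := first_root_lt_card root_m min_m.
suff -> : depth u = m by [].
apply/eqP; rewrite eqn_leq /Defs.depth -minEnat; apply/andP; split.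
  have m_lt' : m < #|N|.+1 by rewrite ltnS ltnW.
  apply: (@bigmin_le_cond _ nat _ #|N| (Ordinal m_lt') _ (@nat_of_ord _)).
  by rewrite /= root_m.
by apply/(@bigmin_geP _ nat); split => [|k /eqP /min_m //]; apply: ltnW.
Qed.

Lemma depth_root : depth root = 0.
Proof. by have [_ min_d _] := depth_spec root; apply/eqP; rewrite -leqn0 min_d. Qed.

Lemma depth_par u : u != root -> depth u = (depth (par u)).+1.
Proof.
move=> u_ne_root.
have [root_u min_u _] := depth_spec u; have [root_pu min_pu _] := depth_spec (par u).
have le_u : depth u <= (depth (par u)).+1 by apply: min_u; rewrite iterSr root_pu.
have pos_u : depth u != 0 by apply: contraNneq u_ne_root => d0; rewrite -root_u d0.
have le_pu : depth (par u) <= (depth u).-1.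
  by apply: min_pu; rewrite -iterSr prednK ?lt0n.
lia.
Qed.

Lemma depth_iter k u : k <= depth u -> depth (iter k par u) = depth u - k.
Proof.
elim: k u => [|k IHk] u le_k; first by rewrite subn0.
have u_ne_root : u != root by apply: contraTneq le_k => ->; rewrite depth_root.
rewrite (depth_par u_ne_root) in le_k *.
by rewrite iterSr IHk // subSS.
Qed.

Lemma ancP a u : reflect (exists k, iter k par u = a) (anc a u).
Proof.
apply: (iffP existsP) => [[k /eqP <-]|[k iter_k]]; first by exists k.
have [root_u _ lt_card] := depth_spec u.
have [le_k|lt_k] := leqP k (depth u).
  by exists (Ordinal (leq_ltn_trans le_k lt_card)); rewrite iter_k.
exists (Ordinal lt_card); rewrite /= root_u -iter_k -(subnK (ltnW lt_k)).
by rewrite iterD root_u iter_par_root.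
Qed.

Lemma anc_depth a u :
  anc a u -> depth a <= depth u /\ a = iter (depth u - depth a) par u.
Proof.
case/ancP=> k <-; have [root_u _ _] := depth_spec u.
have [le_k|lt_k] := leqP k (depth u).
  by rewrite depth_iter // leq_subr subKn.
have -> : iter k par u = root.
  by rewrite -(subnK (ltnW lt_k)) iterD root_u iter_par_root.
by rewrite depth_root subn0 root_u.
Qed.

Lemma anc_refl a : anc a a.
Proof. by apply/ancP; exists 0. Qed.

Lemma anc_par a : anc (par a) a.
Proof. by apply/ancP; exists 1. Qed.

Lemma anc_root u : anc root u.
Proof. by apply/ancP; exists (depth u); case: (depth_spec u). Qed.

Lemma anc_trans a c u : anc a c -> anc c u -> anc a u.
Proof.
by move=> /ancP [k <-] /ancP [l <-]; apply/ancP; exists (k + l); rewrite iterD.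
Qed.

Lemma anc_depth_le a c u :
  anc a u -> anc c u -> depth a <= depth c -> anc a c.
Proof.
move=> /anc_depth [le_a a_iter] /anc_depth [le_c c_iter] le_ac.
apply/ancP; exists (depth c - depth a).
by rewrite {2}c_iter {2}a_iter -iterD; congr iter; lia.
Qed.

Lemma anc_depth_inj a c u :
  anc a u -> anc c u -> depth a = depth c -> a = c.
Proof.
by move=> /anc_depth [_ a_iter] /anc_depth [_ c_iter] eq_ac; rewrite a_iter c_iter eq_ac.
Qed.

Lemma child_towards a u :
  anc a u -> depth a < depth u ->
  exists c, [/\ c != root, par c = a, anc c u & depth c = (depth a).+1].
Proof.
move=> a_u lt_au; have [_ a_iter] := anc_depth a_u.
pose c := iter (depth u - (depth a).+1) par u.
have depth_c : depth c = (depth a).+1 by rewrite depth_iter ?leq_subr // subKn.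
exists c; split.
- by apply: contra_eqN depth_c => /eqP ->; rewrite depth_root.
- by rewrite a_iter -iterS -subSn.
- by apply/ancP; exists (depth u - (depth a).+1).
- exact: depth_c.
Qed.

Local Notation is_leaf := (is_leaf root par).

Lemma leaf_anc_eq L u : is_leaf L -> anc L u -> u = L.
Proof.
move=> leaf_L L_u; have [le_Lu _] := anc_depth L_u.
have [lt_Lu|lt_uL|eq_Lu] := ltngtP (depth L) (depth u).
- have [c [c_ne_root par_c _ _]] := child_towards L_u lt_Lu.
  by move/forallP: leaf_L => /(_ c); rewrite /is_child c_ne_root par_c eqxx.
- by move: le_Lu; rewrite leqNgt lt_uL.
- exact: anc_depth_inj (anc_refl u) L_u (esym eq_Lu).
Qed.

(* a deepest descendant is a leaf *)
Lemma exists_leaf_below u : exists L, is_leaf L && anc u L.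
Proof.
have desc_u : 0 < #|[pred w | anc u w]| by apply/card_gt0P; exists u; exact: anc_refl.
have [L /[!inE] u_L max_L] := eq_bigmax_cond depth desc_u.
exists L; rewrite u_L andbT; apply/forallP => c.
apply/negP => /andP [c_ne_root /eqP par_c].
have u_c : anc u c by apply: anc_trans u_L _; rewrite -par_c anc_par.
have := @leq_bigmax_cond _ (mem [pred w | anc u w]) depth c u_c.
by rewrite max_L (depth_par c_ne_root) par_c ltnn.
Qed.

Lemma sibling_anc_eq a c u :
  a != root -> c != root -> par a = par c -> anc a u -> anc c u -> a = c.
Proof.
move=> a_ne_root c_ne_root par_ac a_u c_u; apply: anc_depth_inj a_u c_u _.
by rewrite (depth_par a_ne_root) (depth_par c_ne_root) par_ac.
Qed.

Lemma anc_par_deeper a c u :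
  anc a u -> anc c u -> depth a < depth c -> anc a (par c).
Proof.
move=> a_u c_u lt_ac.
have c_ne_root : c != root by apply: contraTneq lt_ac => ->; rewrite depth_root.
apply: anc_depth_le a_u (anc_trans (anc_par c) c_u) _.
by move: lt_ac; rewrite (depth_par c_ne_root).
Qed.

(* [a] and [c] are the children of the deepest common ancestor of [L] and [u]
   on the way to [L] and to [u] respectively. *)
Lemma sibling_fork L u :
  is_leaf L -> ~~ anc u L ->
  exists a c, [/\ a != root, c != root, par a = par c, a != c &
                  anc a L /\ anc c u].
Proof.
move=> leaf_L u_not_L; pose A := [pred w | anc w L && anc w u].
have A0 : 0 < #|A| by apply/card_gt0P; exists root; rewrite inE /= !anc_root.
have [w /andP [w_L w_u] max_w] := eq_bigmax_cond depth A0.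
have lt_wL : depth w < depth L.
  have [le_wL _] := anc_depth w_L; rewrite ltn_neqAle le_wL andbT.
  apply: contraNneq u_not_L => eq_wL.
  have wL : w = L := anc_depth_inj w_L (anc_refl L) eq_wL.
  by move: w_u; rewrite wL => /(leaf_anc_eq leaf_L) ->; apply: anc_refl.
have lt_wu : depth w < depth u.
  have [le_wu _] := anc_depth w_u; rewrite ltn_neqAle le_wu andbT.
  apply: contraNneq u_not_L => eq_wu.
  by rewrite -(anc_depth_inj w_u (anc_refl u) eq_wu).
have [a [a_ne_root par_a a_L depth_a]] := child_towards w_L lt_wL.
have [c [c_ne_root par_c c_u _]] := child_towards w_u lt_wu.
exists a, c; split => //; first by rewrite par_a par_c.
apply: contraTneq isT => eq_ac.
have A_a : a \in A by rewrite inE /= a_L eq_ac c_u.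
by have := @leq_bigmax_cond _ (mem A) depth a A_a; rewrite max_w depth_a ltnn.
Qed.

Variable ord : N -> nat.

Local Notation leaf_before := (leaf_before root par ord).
Local Notation leaf_index := (leaf_index root par ord).
Local Notation xcoord := (xcoord root par ord).
Local Notation xright := (xright root par ord).

Lemma leaf_beforeP L1 L2 :
  reflect (exists a c, [/\ a != root, c != root, par a = par c, ord a < ord c &
                           anc a L1 /\ anc c L2])
          (leaf_before L1 L2).
Proof.
apply: (iffP existsP) => [[a /existsP [c /and5P [? ? /eqP ? ? /andP [? ?]]]]|].
  by exists a, c.
case=> a [c [? ? par_ac ? [? ?]]]; exists a; apply/existsP; exists c.
by apply/and5P; split; rewrite ?par_ac //; apply/andP.
Qed.

Lemma leaf_before_irr L : ~~ leaf_before L L.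
Proof.
apply/leaf_beforeP => -[a [c [a_ne_root c_ne_root par_ac lt_ac [a_L c_L]]]].
by move: lt_ac; rewrite (sibling_anc_eq a_ne_root c_ne_root par_ac a_L c_L) ltnn.
Qed.

Lemma leaf_before_trans L1 L2 L3 :
  leaf_before L1 L2 -> leaf_before L2 L3 -> leaf_before L1 L3.
Proof.
move=> /leaf_beforeP [a1 [c1 [a1_ne c1_ne par1 lt1 [a1_L1 c1_L2]]]].
move=> /leaf_beforeP [a2 [c2 [a2_ne c2_ne par2 lt2 [a2_L2 c2_L3]]]].
apply/leaf_beforeP.
have [lt_ac|lt_ca|eq_ac] := ltngtP (depth a2) (depth c1).
- exists a2, c2; split => //; split => //.
  apply: anc_trans a1_L1; apply: anc_trans (anc_par a1).
  by rewrite par1; apply: anc_par_deeper a2_L2 c1_L2 lt_ac.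
- exists a1, c1; split => //; split => //.
  apply: anc_trans c2_L3; apply: anc_trans (anc_par c2).
  by rewrite -par2; apply: anc_par_deeper c1_L2 a2_L2 lt_ca.
- have a2c1 : a2 = c1 := anc_depth_inj a2_L2 c1_L2 eq_ac.
  exists a1, c2; split => //; first by rewrite par1 -par2 a2c1.
  by apply: ltn_trans lt1 _; rewrite -a2c1.
Qed.

Lemma leaf_index_lt L1 L2 :
  is_leaf L1 -> leaf_before L1 L2 -> leaf_index L1 < leaf_index L2.
Proof.
move=> leaf_L1 L1_L2; rewrite ltnS; apply/proper_card/properP; split.
  apply/subsetP => L; rewrite !inE => /andP [-> L_L1].
  exact: leaf_before_trans L_L1 L1_L2.
by exists L1; rewrite !inE ?leaf_L1 ?leaf_before_irr.
Qed.

Lemma leaf_index_le_card L : leaf_index L <= #|N|.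
Proof.
rewrite /Defs.leaf_index -cardsT; apply/proper_card/properP.
split; first exact: subsetT.
by exists L; rewrite !inE // (negbTE (leaf_before_irr L)) andbF.
Qed.

Lemma xcoord_le_leaf_index u L : is_leaf L -> anc u L -> xcoord u <= leaf_index L.
Proof.
by move=> leaf_L u_L; apply: (@bigmin_le_cond _ nat); rewrite /= leaf_L u_L.
Qed.

Lemma leaf_index_le_xright u L : is_leaf L -> anc u L -> leaf_index L <= xright u.
Proof.
move=> leaf_L u_L.
by apply: (@leq_bigmax_cond _ (fun L => is_leaf L && anc u L)); rewrite leaf_L.
Qed.

(* The default [#|N|.+1] of the minimum defining [xcoord] exceeds every leaf
   index, so the minimum is attained. *)
Lemma xcoord_leftmost u :
  exists2 L, is_leaf L && anc u L & xcoord u = leaf_index L.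
Proof.
have [L0 leaf_L0] := exists_leaf_below u.
have index_le L : leaf_index L <= #|N|.+1 by rewrite leqW ?leaf_index_le_card.
have [L leaf_L x_L] := @eq_bigmin _ nat _ #|N|.+1 L0 (fun L => is_leaf L && anc u L)
  leaf_index leaf_L0 (fun L _ => index_le L).
by exists L.
Qed.

Lemma xright_rightmost u :
  exists2 L, is_leaf L && anc u L & xright u = leaf_index L.
Proof.
have [L0 leaf_L0] := exists_leaf_below u.
have leaves_u : 0 < #|[pred L | is_leaf L && anc u L]| by apply/card_gt0P; exists L0.
by have [L leaf_L max_L] := eq_bigmax_cond leaf_index leaves_u; exists L.
Qed.

Lemma xcoord_le_xright u : xcoord u <= xright u.
Proof.
have [L /andP [leaf_L u_L] ->] := xcoord_leftmost u.
exact: leaf_index_le_xright.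
Qed.

Hypothesis sibling_ord : sibling_order root par ord.

Lemma anc_leafE u L : is_leaf L -> anc u L = (xcoord u <= leaf_index L <= xright u).
Proof.
move=> leaf_L; apply/idP/andP => [u_L|[left_L right_L]].
  by rewrite xcoord_le_leaf_index ?leaf_index_le_xright.
apply: contraT => u_not_L.
have [a [c [a_ne c_ne par_ac ne_ac [a_L c_u]]]] := sibling_fork leaf_L u_not_L.
have := sibling_ord a_ne c_ne ne_ac par_ac; rewrite neq_ltn => /orP [lt_ac|lt_ca].
- have [L' /andP [leaf_L' u_L'] x_L'] := xcoord_leftmost u.
  have L_L' : leaf_before L L'.
    by apply/leaf_beforeP; exists a, c; split => //; split => //; apply: anc_trans u_L'.
  by have := leaf_index_lt leaf_L L_L'; rewrite -x_L' ltnNge left_L.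
- have [L' /andP [leaf_L' u_L'] x_L'] := xright_rightmost u.
  have L'_L : leaf_before L' L.
    by apply/leaf_beforeP; exists c, a; split => //; split => //; apply: anc_trans u_L'.
  by have := leaf_index_lt leaf_L' L'_L; rewrite -x_L' ltnNge right_L.
Qed.

Lemma anc_coordE a u :
  anc a u = (xcoord a <= xcoord u <= xright a) && (depth a <= depth u).
Proof.
have [L /andP [leaf_L u_L] ->] := xcoord_leftmost u.
apply/idP/andP => [a_u|[a_L le_au]].
  by rewrite -anc_leafE ?(anc_trans a_u u_L) ?(anc_depth a_u).1.
by apply: (anc_depth_le _ u_L le_au); rewrite anc_leafE.
Qed.

End RootedTree.

Section Segments.
Variable R : realFieldType.
Local Open Scope ring_scope.

Lemma nat_segment_leP (a b z : nat) : (a <= b)%N ->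
  (exists lam : R, 0 <= lam <= 1 /\ z%:R = a%:R + lam * (b%:R - a%:R)) <->
  (a <= z <= b)%N.
Proof.
move=> le_ab; have le_ab_R : a%:R <= b%:R :> R by rewrite ler_nat.
split=> [[lam [/andP [lam_ge0 lam_le1] Ez]]|/andP [le_az le_zb]].
  by rewrite -(ler_nat R) -(ler_nat R z) Ez; apply/andP; split; nra.
have [eq_ab|lt_ab] := eqVneq a b.
  exists 0; rewrite lexx ler01 mul0r addr0; split=> //.
  by congr (_%:R); apply/eqP; rewrite eqn_leq le_az andbT eq_ab.
have gap_gt0 : 0 < b%:R - a%:R :> R by rewrite subr_gt0 ltr_nat ltn_neqAle lt_ab.
exists ((z%:R - a%:R) / (b%:R - a%:R)); split; last by rewrite mulfVK ?gt_eqF //; ring.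
rewrite divr_ge0 ?subr_ge0 ?ler_nat ?(ltW gap_gt0) //=.
by rewrite ler_pdivrMr // mul1r lerD2r ler_nat.
Qed.

Lemma nat_segmentP (a b z : nat) :
  (exists lam : R, 0 <= lam <= 1 /\ z%:R = a%:R + lam * (b%:R - a%:R)) <->
  (minn a b <= z <= maxn a b)%N.
Proof.
have [le_ab|lt_ba] := leqP a b; first exact: nat_segment_leP.
rewrite -(nat_segment_leP _ (ltnW lt_ba)).
by split=> -[lam [/andP [lam_ge0 lam_le1] Ez]]; exists (1 - lam);
  (split; [apply/andP; split; lra | rewrite Ez; ring]).
Qed.

Lemma hv_segments_meetP (x y x1 x2 y1 y2 : nat) :
  (exists p : R * R, segment (x%:R, y1%:R) (x%:R, y2%:R) p /\
                     segment (x1%:R, y%:R) (x2%:R, y%:R) p) <->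
  (minn x1 x2 <= x <= maxn x1 x2)%N /\ (minn y1 y2 <= y <= maxn y1 y2)%N.
Proof.
rewrite /segment /=; split.
  case=> p [[lam [lam01 ->]] [mu [mu01 [Ex Ey]]]].
  split; [apply/nat_segmentP; exists mu | apply/nat_segmentP; exists lam]; split=> //.
    by rewrite -Ex subrr mulr0 addr0.
  by rewrite Ey subrr mulr0 addr0.
case=> /nat_segmentP [mu [mu01 Ex]] /nat_segmentP [lam [lam01 Ey]].
by exists (x%:R, y%:R); split; [exists lam | exists mu];
  rewrite subrr mulr0 addr0 -?Ex -?Ey.
Qed.

End Segments.

Section RDV.
Variables (N : finType) (root : N) (par : N -> N) (V : finType) (t b : V -> N).
Hypotheses (tree : rooted_tree root par) (t_above_b : forall v, anc par (t v) (b v)).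

Lemma paths_meetE v w :
  depth root par (t w) <= depth root par (t v) ->
  (exists u, on_path par t b v u /\ on_path par t b w u) <-> anc par (t v) (b w).
Proof.
move=> le_tw_tv; split=> [[u [/andP [tv_u _] /andP [_ u_bw]]]|tv_bw].
  exact: (anc_trans tree tv_u u_bw).
exists (t v); rewrite /on_path (anc_refl tree) t_above_b tv_bw !andbT; split=> //.
exact: (anc_depth_le tree (t_above_b w) tv_bw le_tw_tv).
Qed.

End RDV.

Theorem theorem2 (R : realFieldType)
  (N : finType) (root : N) (par : N -> N) (ord : N -> nat)
  (V : finType) (adj : rel V) (t b : V -> N) (n : nat) (e : 'I_n -> V) :
  rooted_tree root par ->
  sibling_order root par ord ->
  (forall v w, adj v w = adj w v) -> (forall v, ~~ adj v v) ->
  rdv_rep root par adj t b ->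
  bijective e ->
  (forall i j : 'I_n, (i < j)%N ->
     (depth root par (t (e j)) <= depth root par (t (e i)))%N) ->
  forall i j : 'I_n, (i < j)%N ->
    (adj (e i) (e j) <->
     exists p : R * R, @vseg N root par ord V t b R (e j) p /\ @hseg N root par ord V t R (e i) p).
Proof.
move=> tree sibling_ord _ _ [t_above_b adjE] bij_e bottom_up i j lt_ij.
have ne_ij : e i != e j by apply: contraTneq lt_ij => /(bij_inj bij_e) ->; rewrite ltnn.
have le_t := bottom_up i j lt_ij.
have [le_tb _] := anc_depth tree (t_above_b (e j)).
have le_x := xcoord_le_xright tree ord (t (e i)).
apply: (iff_trans (adjE _ _ ne_ij)).
apply: (iff_trans (paths_meetE tree t_above_b le_t)).
rewrite (anc_coordE tree sibling_ord); apply: iff_sym.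
apply: (iff_trans (hv_segments_meetP _ _ _ _ _ _ _)).
rewrite /ycoord (minn_idPl le_x) (maxn_idPr le_x) (minn_idPr le_tb) (maxn_idPl le_tb).
by split=> [[-> /andP [_ ->]] | /andP [-> ->]]; rewrite ?le_t.
Qed.
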